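(* Let $d\in\{1,2,3\}$. There are constants $\lambda_*>0$ and $C<\infty$ depending only on $d$ such that for every $R>0$: (a) $0<\frac{R^p}{|x|^p}\big(V^\infty(R)-V^\lambda(R)\big)\le V^\infty(x)-V^\lambda(x)$ for all $|x|\ge R$ and $\lambda>0$; (b) $V^\infty(x)-V^\lambda(x)\le C\frac{R^p}{|x|^p}\big(V^\infty(R)-V^\lambda(R)\big)$ for all $|x|\ge R$ and $\lambda\ge\lambda_*/R^{4-d}$. (Here $V^\lambda(R)$ means the value of the radial function $V^\lambda$ at radius $R$.)
   Context: For $\lambda>0$, $V^\lambda$ denotes the unique solution (in the distributional sense) on $\mathbb R^d$ of $\frac12\Delta V^\lambda=\frac12(V^\lambda)^2-\lambda\delta_0$, $V^\lambda>0$; it is radial and $C^2$ off $0$. $V^\infty(x)=2(4-d)|x|^{-2}$, and $V^\lambda\uparrow V^\infty$ as $\lambda\to\infty$. $p=p(d)$ with $p(1)=3$, $p(2)=2\sqrt2$, $p(3)=\frac{1+\sqrt{17}}2$. *)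

From Stdlib Require Import Reals Lra.
Open Scope R_scope.

Definition sphere_area (d : nat) : R :=
  match d with
  | 1%nat => 2
  | 2%nat => 2 * PI
  | 3%nat => 4 * PI
  | _ => 0
  end.

Definition p_exp (d : nat) : R :=
  match d with
  | 1%nat => 3
  | 2%nat => 2 * sqrt 2
  | 3%nat => (1 + sqrt 17) / 2
  | _ => 0
  end.

(* Radial profile of V^infty: V^infty(x) = 2(4-d)|x|^{-2}, r = |x|. *)
Definition Vinf (d : nat) (r : R) : R := 2 * (4 - INR d) / r ^ 2.

(* [IsVlam d lam v]: v : (0,oo) -> R is the radial profile of V^lam, i.e.
   V^lam(x) = v(|x|), where V^lam > 0 solves (1/2) Delta V = (1/2) V^2 - lam delta_0
   in the distributional sense on R^d.  For a positive radial function that is C^2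
   off 0 this is equivalent to:
   - v > 0 on (0,oo);
   - v'' + (d-1)/r v' = v^2 on (0,oo)  (the equation off the origin);
   - the flux condition |S^{d-1}| r^{d-1} v'(r) -> -2 lam as r -> 0+
     (the Dirac mass at 0; finiteness of the limit is equivalent to
     local integrability of V^2 near 0). *)
Definition IsVlam (d : nat) (lam : R) (v : R -> R) : Prop :=
  (forall r, 0 < r -> 0 < v r) /\
  exists v' v'' : R -> R,
    (forall r, 0 < r -> derivable_pt_lim v r (v' r)) /\
    (forall r, 0 < r -> derivable_pt_lim v' r (v'' r)) /\
    (forall r, 0 < r -> v'' r + (INR d - 1) / r * v' r = (v r) ^ 2) /\
    (forall eps, 0 < eps -> exists delta, 0 < delta /\
       forall r, 0 < r < delta ->
         Rabs (sphere_area d * r ^ (d - 1) * v' r + 2 * lam) < eps).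

(* Write [L_k f = f'' + (k/r) f'] with [k = d - 1]. A function [h] with [L_k h <= c h],
   [c > 0], has no negative interior minimum; the difference [u - v] of two solutions of
   [L_k v = v^2] is such a function with [c = u + v]. Since [V^infty] and the dilations
   [mu^2 V^lam0 (mu r)] are themselves solutions, comparing fluxes at [0] gives
   [V^lam <= V^infty] and [mu^2 V^lam0 (mu r) <= V^lam (r)] when [mu^(4-d) lam0 < lam].
   The gap [w = V^infty - V^lam] solves [L_k w = (2 V^infty - w) w], whose linearization
   [L_k w = 2 V^infty w] has the decaying solution [r^(-p)]: comparison with [w(R) (R/r)^p]
   gives (a). For (b), when [lam R^(4-d)] is large the dilation bound, applied to a
   reference solution [V^1] that comes within [9/10] of [V^infty] somewhere, gives
   [w <= V^infty / 10] beyond [R]; then [w = O(r^(-5/2))], and the barrier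
   [w(R) (R/r)^p (2 - (R/r)^(1/2))] dominates [w]. *)

From Stdlib Require Import Reals Lra Lia Classical.
From Coquelicot Require Import Coquelicot.
Open Scope R_scope.

(** * A minimum principle for the radial operator *)

Definition radial_op (k : R) (f' f'' : R -> R) (r : R) : R := f'' r + k / r * f' r.

Definition supersolution_at (k : R) (c h h' h'' : R -> R) (r : R) : Prop :=
  0 < c r /\ radial_op k h' h'' r <= c r * h r.

Definition liminf_nonneg (h : R -> R) : Prop :=
  forall m, 0 < m -> exists b, forall r, b <= r -> - m < h r.

Lemma radial_op_sub k f' f'' g' g'' r :
  radial_op k (fun x => f' x - g' x) (fun x => f'' x - g'' x) r
  = radial_op k f' f'' r - radial_op k g' g'' r.
Proof. unfold radial_op. ring. Qed.

Lemma exists_small_pos del e : 0 < del -> 0 < e -> exists t, 0 < t < del /\ t <= e.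
Proof.
  intros Hdel He. exists (Rmin del e / 2).
  unfold Rmin; destruct Rle_dec; lra.
Qed.

Lemma derivable_pt_lim_decr_right (f : R -> R) x l :
  derivable_pt_lim f x l -> l < 0 ->
  exists del, 0 < del /\ forall t, 0 < t < del -> f (x + t) < f x.
Proof.
  intros Hf Hl. destruct (Hf (- l / 2)) as [del Hdel]; [lra|].
  exists del; split; [apply cond_pos|]. intros t [Ht0 Ht1].
  specialize (Hdel t ltac:(lra) ltac:(rewrite Rabs_right; lra)).
  apply Rabs_def2 in Hdel.
  assert (Hq : (f (x + t) - f x) / t < 0) by lra.
  assert (f (x + t) - f x < 0); [|lra].
  replace (f (x + t) - f x) with ((f (x + t) - f x) / t * t) by (field; lra). nra.
Qed.

Section MinimumPrinciple.

Variables (k : R) (c h h' h'' : R -> R).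

Lemma supersolution_critical_concave r :
  supersolution_at k c h h' h'' r -> h r < 0 -> h' r = 0 -> h'' r < 0.
Proof.
  unfold supersolution_at, radial_op. intros [Hc Hs] Hneg Hcrit.
  rewrite Hcrit, Rmult_0_r, Rplus_0_r in Hs. nra.
Qed.

(* The minimum [m] of [h] over [a, b] is interior, hence a critical point
   with [h'' m < 0]: then [h] decreases right of [m], contradicting minimality. *)
Lemma interval_min_principle a b x0 :
  a <= x0 <= b ->
  (forall r, a <= r <= b -> derivable_pt_lim h r (h' r)) ->
  (forall r, a < r < b -> derivable_pt_lim h' r (h'' r)) ->
  (forall r, a < r < b -> supersolution_at k c h h' h'' r) ->
  h x0 < 0 -> h' a < 0 \/ h x0 < h a -> h x0 < h b -> False.
Proof.
  intros Hx0 Hd1 Hd2 Hsup Hneg Ha Hb.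
  assert (Hab : a < b) by (destruct (Req_dec x0 b); subst; lra).
  destruct (continuity_ab_min h a b ltac:(lra)) as [m [Hmin Hm]].
  { intros r Hr. apply derivable_continuous_pt. exists (h' r). now apply Hd1. }
  assert (Hmx0 : h m <= h x0) by (apply Hmin; lra).
  assert (Hma : m <> a).
  { intros ->. destruct Ha as [Ha|Ha]; [|lra].
    destruct (derivable_pt_lim_decr_right h a (h' a) (Hd1 a ltac:(lra)) Ha)
      as [del [Hdel Hdecr]].
    destruct (exists_small_pos del (b - a) Hdel ltac:(lra)) as [t [Ht Htb]].
    specialize (Hdecr t Ht). specialize (Hmin (a + t) ltac:(lra)). lra. }
  assert (Hint : a < m < b) by (destruct (Req_dec m b); subst; lra).
  assert (Hcrit : h' m = 0).
  { rewrite <- (derive_pt_eq_0 h m (h' m) (exist _ (h' m) (Hd1 m ltac:(lra))))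
      by (apply Hd1; lra).
    apply (deriv_minimum h a b); try lra. intros x Hx1 Hx2. apply Hmin; lra. }
  assert (Hconc := supersolution_critical_concave m (Hsup m Hint) ltac:(lra) Hcrit).
  destruct (derivable_pt_lim_decr_right h' m (h'' m) (Hd2 m Hint) Hconc)
    as [del [Hdel Hdecr]].
  destruct (exists_small_pos del (b - m) Hdel ltac:(lra)) as [t [Ht Htb]].
  destruct (MVT_cor2 h h' m (m + t) ltac:(lra)) as [xi [Hmvt Hxi]].
  { intros r Hr. apply Hd1. lra. }
  assert (Hxi' : h' xi < 0).
  { rewrite <- Hcrit. replace xi with (m + (xi - m)) by ring. apply Hdecr. lra. }
  specialize (Hmin (m + t) ltac:(lra)). nra.
Qed.

Lemma liminf_nonneg_above x0 :
  liminf_nonneg h -> h x0 < 0 -> exists b, x0 < b /\ h x0 < h b.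
Proof.
  intros Hlim Hneg. destruct (Hlim (- h x0) ltac:(lra)) as [b Hb].
  exists (Rmax b (x0 + 1)). split.
  - generalize (Rmax_r b (x0 + 1)). lra.
  - generalize (Hb (Rmax b (x0 + 1)) (Rmax_l _ _)). lra.
Qed.

Lemma halfline_min_principle R1 :
  (forall r, R1 <= r -> derivable_pt_lim h r (h' r)) ->
  (forall r, R1 < r -> derivable_pt_lim h' r (h'' r)) ->
  (forall r, R1 < r -> supersolution_at k c h h' h'' r) ->
  0 <= h R1 -> liminf_nonneg h ->
  forall r, R1 <= r -> 0 <= h r.
Proof.
  intros Hd1 Hd2 Hsup H0 Hlim x0 Hx0.
  destruct (Rle_or_lt 0 (h x0)) as [|Hneg]; [assumption|exfalso].
  destruct (liminf_nonneg_above x0 Hlim Hneg) as [b [Hb Hhb]].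
  apply (interval_min_principle R1 b x0); try lra.
  - intros r Hr. apply Hd1. lra.
  - intros r Hr. apply Hd2. lra.
  - intros r Hr. apply Hsup. lra.
Qed.

Lemma origin_min_principle :
  (forall r, 0 < r -> derivable_pt_lim h r (h' r)) ->
  (forall r, 0 < r -> derivable_pt_lim h' r (h'' r)) ->
  (forall r, 0 < r -> supersolution_at k c h h' h'' r) ->
  (exists del, 0 < del /\ forall r, 0 < r < del -> h' r < 0) -> liminf_nonneg h ->
  forall r, 0 < r -> 0 <= h r.
Proof.
  intros Hd1 Hd2 Hsup [del [Hdel Hdecr]] Hlim x0 Hx0.
  destruct (Rle_or_lt 0 (h x0)) as [|Hneg]; [assumption|exfalso].
  destruct (liminf_nonneg_above x0 Hlim Hneg) as [b [Hb Hhb]].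
  destruct (exists_small_pos del x0 Hdel Hx0) as [a [Ha Hax0]].
  apply (interval_min_principle (a / 2) b x0); try lra.
  - intros r Hr. apply Hd1. lra.
  - intros r Hr. apply Hd2. lra.
  - intros r Hr. apply Hsup. lra.
  - left. apply Hdecr. lra.
Qed.

End MinimumPrinciple.

(** * Power laws *)

Definition negpow (c q x : R) : R := c * Rpower x (- q).
Definition negpow' (c q x : R) : R := - q * c * Rpower x (- q) / x.
Definition negpow'' (c q x : R) : R := q * (q + 1) * c * Rpower x (- q) / x ^ 2.

Lemma Rpower_pos x y : 0 < Rpower x y.
Proof. apply exp_pos. Qed.

Lemma Rpower_opp_plus x a b : Rpower x (- (a + b)) = Rpower x (- a) * Rpower x (- b).
Proof. rewrite <- Rpower_plus. f_equal. ring. Qed.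

Lemma Rpower_opp1 x : 0 < x -> Rpower x (-1) = / x.
Proof. intros Hx. replace (-1) with (- (1)) by ring. now rewrite Rpower_Ropp, Rpower_1. Qed.

Lemma negpow_two c x : 0 < x -> negpow c 2 x = c / x ^ 2.
Proof.
  intros Hx. unfold negpow. rewrite Rpower_Ropp.
  replace 2 with (INR 2) at 1 by (simpl; ring). rewrite Rpower_pow by assumption.
  reflexivity.
Qed.

Lemma negpow_plus c a b x : negpow c (a + b) x = negpow c a x * Rpower x (- b).
Proof. unfold negpow. rewrite Rpower_opp_plus. ring. Qed.

Lemma Rpower_two x : 0 < x -> Rpower x 2 = x ^ 2.
Proof. intros Hx. replace 2 with (INR 2) at 1 by (simpl; ring). now rewrite Rpower_pow. Qed.

Lemma negpow_one c q : negpow c q 1 = c.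
Proof. unfold negpow, Rpower. rewrite ln_1, Rmult_0_r, exp_0. ring. Qed.

Lemma negpow_rescaled W R0 q x : 0 < R0 -> 0 < x ->
  negpow (W * Rpower R0 q) q x = W * (Rpower R0 q / Rpower x q).
Proof.
  intros HR0 Hx. unfold negpow. rewrite Rpower_Ropp.
  generalize (Rpower_pos x q). intros. field. lra.
Qed.

Lemma derivable_pt_lim_negpow c q x :
  0 < x -> derivable_pt_lim (negpow c q) x (negpow' c q x).
Proof.
  intros Hx. unfold negpow, negpow'.
  replace (- q * c * Rpower x (- q) / x) with (c * (- q * Rpower x (- q - 1))).
  - apply derivable_pt_lim_scal. now apply derivable_pt_lim_power.
  - unfold Rminus. rewrite Rpower_plus, Rpower_opp1 by assumption.
    field. lra.
Qed.

Lemma negpow'_shift c q x : 0 < x -> negpow' c q x = negpow (- q * c) (q + 1) x.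
Proof.
  intros Hx. unfold negpow, negpow'. rewrite Rpower_opp_plus, Rpower_opp1 by lra.
  field. lra.
Qed.

Lemma derivable_pt_lim_negpow' c q x :
  0 < x -> derivable_pt_lim (negpow' c q) x (negpow'' c q x).
Proof.
  intros Hx.
  apply (derivable_pt_lim_locally_ext (negpow (- q * c) (q + 1)) _ x 0 (x + 1)); [lra| |].
  - intros z Hz. symmetry. apply negpow'_shift. lra.
  - replace (negpow'' c q x) with (negpow' (- q * c) (q + 1) x).
    + now apply derivable_pt_lim_negpow.
    + unfold negpow', negpow''. rewrite Rpower_opp_plus, Rpower_opp1 by lra.
      field. lra.
Qed.

Lemma radial_op_negpow k c q x :
  0 < x -> radial_op k (negpow' c q) (negpow'' c q) x
           = (q ^ 2 - (k - 1) * q) / x ^ 2 * negpow c q x.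
Proof. intros Hx. unfold radial_op, negpow, negpow', negpow''. field. lra. Qed.

Lemma negpow_lt_eventually c q : 1 <= q ->
  forall m, 0 < m -> exists b, forall r, b <= r -> negpow c q r < m.
Proof.
  intros Hq m Hm. set (b := 1 + Rabs c / m).
  assert (Hb : 0 <= Rabs c / m) by (apply Rdiv_le_0_compat; [apply Rabs_pos|lra]).
  exists b. intros r Hr.
  assert (Hr1 : 1 <= r) by (unfold b in Hr; lra).
  assert (Hpow : Rpower r (- q) <= / r).
  { rewrite <- Rpower_opp1 by lra.
    apply Rle_Rpower; lra. }
  assert (Habs : negpow c q r <= Rabs c * / r).
  { unfold negpow. apply Rle_trans with (Rabs c * Rpower r (- q)).
    - apply Rmult_le_compat_r; [left; apply Rpower_pos|apply Rle_abs].
    - apply Rmult_le_compat_l; [apply Rabs_pos|assumption]. }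
  assert (Rabs c * / r < m); [|lra].
  apply (Rmult_lt_reg_r r); [lra|]. rewrite Rmult_assoc, Rinv_l, Rmult_1_r by lra.
  replace (Rabs c) with (Rabs c / m * m) by (field; lra). unfold b in Hr. nra.
Qed.

Lemma liminf_nonneg_of_ge_negpow (h : R -> R) c q b0 : 1 <= q ->
  (forall r, b0 <= r -> - negpow c q r <= h r) -> liminf_nonneg h.
Proof.
  intros Hq Hge m Hm. destruct (negpow_lt_eventually c q Hq m Hm) as [b Hb].
  exists (Rmax b b0). intros r Hr.
  specialize (Hb r ltac:(generalize (Rmax_l b b0); lra)).
  specialize (Hge r ltac:(generalize (Rmax_r b b0); lra)). lra.
Qed.

(** * Solutions of [L_k v = v^2] *)

Record radial_sol (k : R) (v v' v'' : R -> R) : Prop := {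
  sol_pos : forall r, 0 < r -> 0 < v r;
  sol_d1 : forall r, 0 < r -> derivable_pt_lim v r (v' r);
  sol_d2 : forall r, 0 < r -> derivable_pt_lim v' r (v'' r);
  sol_eq : forall r, 0 < r -> radial_op k v' v'' r = v r ^ 2 }.

Section RadialSolutions.

Variables (k : R) (u u' u'' v v' v'' : R -> R).
Hypotheses (hu : radial_sol k u u' u'') (hv : radial_sol k v v' v'').

Lemma radial_sol_diff_supersol r : 0 < r ->
  supersolution_at k (fun x => u x + v x) (fun x => u x - v x)
    (fun x => u' x - v' x) (fun x => u'' x - v'' x) r.
Proof.
  intros Hr. split.
  - generalize (sol_pos _ _ _ _ hu r Hr) (sol_pos _ _ _ _ hv r Hr). lra.
  - rewrite radial_op_sub, (sol_eq _ _ _ _ hu r Hr), (sol_eq _ _ _ _ hv r Hr).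
    right. ring.
Qed.

Lemma radial_sol_diff_d1 r : 0 < r ->
  derivable_pt_lim (fun x => u x - v x) r (u' r - v' r).
Proof.
  intros Hr. apply derivable_pt_lim_minus; [apply (sol_d1 _ _ _ _ hu)|apply (sol_d1 _ _ _ _ hv)];
    assumption.
Qed.

Lemma radial_sol_diff_d2 r : 0 < r ->
  derivable_pt_lim (fun x => u' x - v' x) r (u'' r - v'' r).
Proof.
  intros Hr. apply derivable_pt_lim_minus; [apply (sol_d2 _ _ _ _ hu)|apply (sol_d2 _ _ _ _ hv)];
    assumption.
Qed.

End RadialSolutions.

Lemma derivable_pt_lim_dilate (f f' : R -> R) mu c t : 0 < mu -> 0 < t ->
  (forall x, 0 < x -> derivable_pt_lim f x (f' x)) ->
  derivable_pt_lim (fun t => c * f (mu * t)) t (c * mu * f' (mu * t)).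
Proof.
  intros Hmu Ht Hf.
  replace (c * mu * f' (mu * t)) with (c * (f' (mu * t) * mu)) by ring.
  apply derivable_pt_lim_scal.
  apply (derivable_pt_lim_comp (fun t => mu * t) f t mu (f' (mu * t))).
  - generalize (derivable_pt_lim_scal id mu t 1 (derivable_pt_lim_id t)).
    now rewrite Rmult_1_r.
  - apply Hf. nra.
Qed.

Lemma radial_sol_dilate k v v' v'' mu : 0 < mu -> radial_sol k v v' v'' ->
  radial_sol k (fun t => mu ^ 2 * v (mu * t)) (fun t => mu ^ 3 * v' (mu * t))
    (fun t => mu ^ 4 * v'' (mu * t)).
Proof.
  intros Hmu [Hpos Hd1 Hd2 Heq]. split; intros t Ht.
  - apply Rmult_lt_0_compat; [apply pow_lt; lra|apply Hpos; nra].
  - replace (mu ^ 3) with (mu ^ 2 * mu) by ring. now apply derivable_pt_lim_dilate.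
  - replace (mu ^ 4) with (mu ^ 3 * mu) by ring. now apply derivable_pt_lim_dilate.
  - specialize (Heq (mu * t) ltac:(nra)). unfold radial_op in *.
    replace (mu ^ 4 * v'' (mu * t) + k / t * (mu ^ 3 * v' (mu * t)))
      with (mu ^ 4 * (v'' (mu * t) + k / (mu * t) * v' (mu * t))) by (field; lra).
    rewrite Heq. ring.
Qed.

Definition ko_barrier (a b x : R) : R := 10 / (x - a) ^ 2 + 10 / (b - x) ^ 2.

Lemma ko_barrier_derivs a b x : a < x < b ->
  derivable_pt_lim (ko_barrier a b) x (- 20 / (x - a) ^ 3 + 20 / (b - x) ^ 3) /\
  derivable_pt_lim (fun x => - 20 / (x - a) ^ 3 + 20 / (b - x) ^ 3) x
    (60 / (x - a) ^ 4 + 60 / (b - x) ^ 4).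
Proof.
  intros Hx.
  split; apply is_derive_Reals; unfold ko_barrier; auto_derive.
  all: try (repeat split; apply Rgt_not_eq; repeat apply Rmult_lt_0_compat; lra).
  all: field; lra.
Qed.

(* [b - x < x] bounds the drift coefficient [k / x] by [2 / (b - x)]. *)
Lemma ko_barrier_super k a b x : 0 <= k <= 2 -> a < x < b -> b - x < x ->
  radial_op k (fun x => - 20 / (x - a) ^ 3 + 20 / (b - x) ^ 3)
    (fun x => 60 / (x - a) ^ 4 + 60 / (b - x) ^ 4) x <= ko_barrier a b x ^ 2.
Proof.
  intros Hk Hx Hbx. unfold radial_op, ko_barrier.
  set (A := / (x - a)). set (B := / (b - x)).
  assert (HA : 0 < A) by (apply Rinv_0_lt_compat; lra).
  assert (HB : 0 < B) by (apply Rinv_0_lt_compat; lra).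
  assert (Hkx : k / x <= 2 * B).
  { unfold B. apply Rle_trans with (2 / x).
    - apply Rmult_le_compat_r; [left; apply Rinv_0_lt_compat|]; lra.
    - unfold Rdiv. apply Rmult_le_compat_l; [lra|].
      apply Rinv_le_contravar; lra. }
  replace (60 / (x - a) ^ 4 + 60 / (b - x) ^ 4 +
           k / x * (- 20 / (x - a) ^ 3 + 20 / (b - x) ^ 3))
    with (60 * A ^ 4 + 60 * B ^ 4 - 20 * (k / x) * A ^ 3 + 20 * (k / x) * B ^ 3)
    by (unfold A, B; field; lra).
  replace ((10 / (x - a) ^ 2 + 10 / (b - x) ^ 2) ^ 2) with ((10 * A ^ 2 + 10 * B ^ 2) ^ 2)
    by (unfold A, B; field; lra).
  assert (0 <= k / x) by (apply Rdiv_le_0_compat; lra).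
  assert (0 <= k / x * A ^ 3) by (apply Rmult_le_pos; [|apply pow_le]; lra).
  assert (k / x * B ^ 3 <= 2 * B * B ^ 3) by (apply Rmult_le_compat_r; [apply pow_le|]; lra).
  assert (0 <= A ^ 2 * B ^ 2) by (apply Rmult_le_pos; apply pow_le; lra).
  nra.
Qed.

Lemma inv_sq_gt_of_small (M eta : R) : 0 <= M -> 0 < eta -> eta <= 1 / (M + 1) ->
  M < 10 / eta ^ 2.
Proof.
  intros HM He Hle.
  assert (Hprod : eta * (M + 1) <= 1).
  { apply (Rmult_le_compat_r (M + 1)) in Hle; [|lra].
    replace (1 / (M + 1) * (M + 1)) with 1 in Hle by (field; lra). exact Hle. }
  apply (Rmult_lt_reg_r (eta ^ 2)); [apply pow_lt; lra|].
  replace (10 / eta ^ 2 * eta ^ 2) with 10 by (field; lra). nra.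
Qed.

(* Keller-Osserman: compare with the barrier blowing up at [2r/3] and [4r/3],
   which takes the value [180 / r^2] at [r]. *)
Lemma radial_sol_keller_osserman k v v' v'' : 0 <= k <= 2 -> radial_sol k v v' v'' ->
  forall r, 0 < r -> v r <= 180 / r ^ 2.
Proof.
  intros Hk Hsol r Hr. destruct Hsol as [Hpos Hd1 Hd2 Heq].
  set (a := 2 * r / 3). set (b := 4 * r / 3).
  destruct (Rle_or_lt (v r) (180 / r ^ 2)) as [|Hbig]; [assumption|exfalso].
  destruct (continuity_ab_maj v a b ltac:(unfold a, b; lra)) as [xM [HM HxM]].
  { intros x Hx. apply derivable_continuous_pt. exists (v' x). apply Hd1.
    unfold a in Hx. lra. }
  set (M := v xM).
  assert (HM0 : 0 < M) by (apply Hpos; unfold a in HxM; lra).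
  set (eta := Rmin (r / 6) (1 / (M + 1))).
  assert (He : 0 < eta)
    by (unfold eta, Rmin; destruct Rle_dec; [|apply Rdiv_lt_0_compat]; lra).
  assert (Her : eta <= r / 6) by apply Rmin_l.
  assert (HMeta := inv_sq_gt_of_small M eta ltac:(lra) He (Rmin_r _ _)).
  assert (Hbar_pos : forall x, a < x < b -> 0 < 10 / (x - a) ^ 2 /\ 0 < 10 / (b - x) ^ 2).
  { intros x Hx. split; apply Rdiv_lt_0_compat; try lra; apply pow_lt; lra. }
  assert (Hbar_r : ko_barrier a b r = 180 / r ^ 2).
  { unfold ko_barrier, a, b. field. lra. }
  apply (interval_min_principle k (fun x => ko_barrier a b x + v x)
           (fun x => ko_barrier a b x - v x)
           (fun x => - 20 / (x - a) ^ 3 + 20 / (b - x) ^ 3 - v' x)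
           (fun x => 60 / (x - a) ^ 4 + 60 / (b - x) ^ 4 - v'' x)
           (a + eta) (b - eta) r).
  - unfold a, b. lra.
  - intros x Hx. apply derivable_pt_lim_minus.
    + apply ko_barrier_derivs. unfold a, b in *. lra.
    + apply Hd1. unfold a in *. lra.
  - intros x Hx. apply derivable_pt_lim_minus.
    + apply ko_barrier_derivs. unfold a, b in *. lra.
    + apply Hd2. unfold a in *. lra.
  - intros x Hx. assert (Hx0 : 0 < x) by (unfold a in Hx; lra).
    assert (Hxab : a < x < b) by lra.
    assert (HS := Hbar_pos x Hxab). assert (Hvx := Hpos x Hx0). split.
    + unfold ko_barrier. lra.
    + rewrite (radial_op_sub k (fun x => - 20 / (x - a) ^ 3 + 20 / (b - x) ^ 3) _ v').
      rewrite Heq by assumption.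
      assert (Hsup := ko_barrier_super k a b x Hk Hxab ltac:(unfold a, b in *; lra)).
      nra.
  - lra.
  - right. assert (v (a + eta) <= M) by (apply HM; unfold a, b; lra).
    assert (HS := Hbar_pos (a + eta) ltac:(unfold a, b; lra)).
    unfold ko_barrier in *. replace (a + eta - a) with eta in * by ring.
    assert (0 < 180 / r ^ 2) by (apply Rdiv_lt_0_compat; [lra|apply pow_lt; lra]). lra.
  - assert (v (b - eta) <= M) by (apply HM; unfold a, b; lra).
    assert (HS := Hbar_pos (b - eta) ltac:(unfold a, b; lra)).
    unfold ko_barrier in *. replace (b - (b - eta)) with eta in * by ring.
    assert (0 < 180 / r ^ 2) by (apply Rdiv_lt_0_compat; [lra|apply pow_lt; lra]). lra.
Qed.

(** * The singular solution and fluxes at the origin *)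

Definition dVinf (d : nat) (r : R) : R := - 4 * (4 - INR d) / r ^ 3.
Definition ddVinf (d : nat) (r : R) : R := 12 * (4 - INR d) / r ^ 4.

Definition has_flux (d : nat) (lam : R) (v' : R -> R) : Prop :=
  forall eps, 0 < eps -> exists delta, 0 < delta /\
    forall r, 0 < r < delta -> Rabs (sphere_area d * r ^ (d - 1) * v' r + 2 * lam) < eps.

Lemma IsVlam_sol d lam v : IsVlam d lam v ->
  exists v' v'', radial_sol (INR d - 1) v v' v'' /\ has_flux d lam v'.
Proof.
  intros [Hpos [v' [v'' [Hd1 [Hd2 [Heq Hflux]]]]]].
  exists v', v''. split; [split|]; assumption.
Qed.

Section Dimension.

Variable d : nat.
Hypothesis hd : (1 <= d <= 3)%nat.

Lemma INR_dim_bounds : 1 <= INR d <= 3.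
Proof. destruct d as [|[|[|[|]]]]; simpl; try lia; lra. Qed.

Lemma sphere_area_pos : 0 < sphere_area d.
Proof. generalize PI_RGT_0. destruct d as [|[|[|[|]]]]; simpl; try lia; lra. Qed.

Lemma Vinf_pos r : 0 < r -> 0 < Vinf d r.
Proof.
  intros Hr. generalize INR_dim_bounds. intros.
  apply Rdiv_lt_0_compat; [lra|apply pow_lt; lra].
Qed.

Lemma Vinf_negpow r : 0 < r -> Vinf d r = negpow (2 * (4 - INR d)) 2 r.
Proof. intros Hr. now rewrite negpow_two. Qed.

Lemma Vinf_dilate mu r : 0 < mu -> 0 < r -> mu ^ 2 * Vinf d (mu * r) = Vinf d r.
Proof. intros Hmu Hr. unfold Vinf. field. lra. Qed.

Lemma radial_sol_Vinf : radial_sol (INR d - 1) (Vinf d) (dVinf d) (ddVinf d).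
Proof.
  split; intros r Hr.
  - now apply Vinf_pos.
  - apply is_derive_Reals. unfold Vinf, dVinf. auto_derive.
    + repeat split. apply Rgt_not_eq. repeat apply Rmult_lt_0_compat; lra.
    + field. lra.
  - apply is_derive_Reals. unfold dVinf, ddVinf. auto_derive.
    + repeat split. apply Rgt_not_eq. repeat apply Rmult_lt_0_compat; lra.
    + field. lra.
  - unfold radial_op, Vinf, dVinf, ddVinf. field. lra.
Qed.

Lemma derivable_pt_lim_flux v v' v'' r : radial_sol (INR d - 1) v v' v'' -> 0 < r ->
  derivable_pt_lim (fun x => x ^ (d - 1) * v' x) r (r ^ (d - 1) * v r ^ 2).
Proof.
  intros [Hpos Hd1 Hd2 Heq] Hr.
  replace (r ^ (d - 1) * v r ^ 2)
    with (INR (d - 1) * r ^ pred (d - 1) * v' r + r ^ (d - 1) * v'' r).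
  - apply derivable_pt_lim_mult; [apply derivable_pt_lim_pow|now apply Hd2].
  - rewrite <- (Heq r Hr). unfold radial_op.
    destruct d as [|[|[|[|]]]]; try lia; simpl; field; lra.
Qed.

Lemma flux_increasing v v' v'' t r : radial_sol (INR d - 1) v v' v'' -> 0 < t < r ->
  t ^ (d - 1) * v' t < r ^ (d - 1) * v' r.
Proof.
  intros Hsol Htr.
  destruct (MVT_cor2 (fun x => x ^ (d - 1) * v' x) (fun x => x ^ (d - 1) * v x ^ 2) t r)
    as [c [Hmvt Hc]]; [lra| |].
  { intros c Hc. apply (derivable_pt_lim_flux v v' v''); [assumption|lra]. }
  assert (0 < c ^ (d - 1) * v c ^ 2).
  { apply Rmult_lt_0_compat; apply pow_lt; [lra|apply (sol_pos _ _ _ _ Hsol); lra]. }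
  simpl in Hmvt. nra.
Qed.

Lemma flux_ge lam v v' v'' : radial_sol (INR d - 1) v v' v'' -> has_flux d lam v' ->
  forall r, 0 < r -> - 2 * lam <= sphere_area d * r ^ (d - 1) * v' r.
Proof.
  intros Hsol Hflux r Hr.
  destruct (Rle_or_lt (- 2 * lam) (sphere_area d * r ^ (d - 1) * v' r)) as [|Hlt];
    [assumption|exfalso].
  destruct (Hflux (- 2 * lam - sphere_area d * r ^ (d - 1) * v' r) ltac:(lra)) as [del [Hdel Hnear]].
  destruct (exists_small_pos del r Hdel Hr) as [t [Ht Htr]].
  specialize (Hnear (t / 2) ltac:(lra)). apply Rabs_def2 in Hnear.
  assert (Hmono := flux_increasing v v' v'' (t / 2) r Hsol ltac:(lra)).
  apply (Rmult_lt_compat_l (sphere_area d) _ _ sphere_area_pos) in Hmono. lra.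
Qed.

Lemma has_flux_near_origin lam v' a : has_flux d lam v' -> a < lam ->
  exists del, 0 < del /\
    forall r, 0 < r < del -> sphere_area d * r ^ (d - 1) * v' r < - 2 * a.
Proof.
  intros Hflux Ha. destruct (Hflux (2 * (lam - a)) ltac:(lra)) as [del [Hdel Hnear]].
  exists del. split; [assumption|]. intros r Hr.
  specialize (Hnear r Hr). apply Rabs_def2 in Hnear. lra.
Qed.

Lemma Vinf_flux_near_origin a : 0 < a ->
  exists del, 0 < del /\
    forall r, 0 < r < del -> sphere_area d * r ^ (d - 1) * dVinf d r < - 2 * a.
Proof.
  intros Ha. assert (HS := sphere_area_pos). assert (HD := INR_dim_bounds).
  exists (Rmin 1 (2 * sphere_area d / a)). split.
  { unfold Rmin. destruct Rle_dec; [lra|apply Rdiv_lt_0_compat; lra]. }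
  intros r [Hr Hrdel].
  assert (Hr1 : r < 1) by (generalize (Rmin_l 1 (2 * sphere_area d / a)); lra).
  assert (Hra : r * a < 2 * sphere_area d).
  { assert (Hlt : r < 2 * sphere_area d / a)
      by (generalize (Rmin_r 1 (2 * sphere_area d / a)); lra).
    apply (Rmult_lt_compat_r a) in Hlt; [|assumption].
    replace (2 * sphere_area d / a * a) with (2 * sphere_area d) in Hlt by (field; lra).
    exact Hlt. }
  assert (Hpow : r ^ (d - 1) * r ^ (4 - d) = r ^ 3)
    by (rewrite <- pow_add; f_equal; lia).
  assert (Hsmall : r ^ (4 - d) <= r).
  { replace (4 - d)%nat with (S (3 - d)) by lia. rewrite <- tech_pow_Rmult.
    assert (r ^ (3 - d) <= 1) by (rewrite <- (pow1 (3 - d)); apply pow_incr; lra). nra. }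
  assert (Hpos : 0 < r ^ (4 - d)) by (apply pow_lt; lra).
  unfold dVinf. rewrite <- Hpow.
  replace (sphere_area d * r ^ (d - 1) * (- 4 * (4 - INR d) / (r ^ (d - 1) * r ^ (4 - d))))
    with (- (4 * (4 - INR d) * sphere_area d) / r ^ (4 - d))
    by (field; split; apply Rgt_not_eq; [assumption|apply pow_lt; lra]).
  apply (Rmult_lt_reg_r (r ^ (4 - d))); [assumption|].
  replace (- (4 * (4 - INR d) * sphere_area d) / r ^ (4 - d) * r ^ (4 - d))
    with (- (4 * (4 - INR d) * sphere_area d)) by (field; lra).
  nra.
Qed.

Lemma deriv_diff_neg_near_origin u' w' a :
  (exists del, 0 < del /\
     forall r, 0 < r < del -> sphere_area d * r ^ (d - 1) * u' r < - 2 * a) ->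
  (forall r, 0 < r -> - 2 * a <= sphere_area d * r ^ (d - 1) * w' r) ->
  exists del, 0 < del /\ forall r, 0 < r < del -> u' r - w' r < 0.
Proof.
  intros [del [Hdel Hu]] Hw. exists del. split; [assumption|]. intros r Hr.
  specialize (Hu r Hr). specialize (Hw r ltac:(lra)).
  assert (Hpos : 0 < sphere_area d * r ^ (d - 1))
    by (apply Rmult_lt_0_compat; [apply sphere_area_pos|apply pow_lt; lra]).
  nra.
Qed.

Lemma flux_dilate v0' mu r :
  sphere_area d * r ^ (d - 1) * (mu ^ 3 * v0' (mu * r))
  = mu ^ (4 - d) * (sphere_area d * (mu * r) ^ (d - 1) * v0' (mu * r)).
Proof. destruct d as [|[|[|[|]]]]; try lia; simpl; ring. Qed.

End Dimension.

(* [L_k r^(-p) = (p^2 - (d-2) p) r^(-p-2) = 2 V^infty r^(-p)]. *)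
Lemma p_exp_spec d : (1 <= d <= 3)%nat ->
  1 <= p_exp d /\ p_exp d ^ 2 - (INR d - 2) * p_exp d = 4 * (4 - INR d).
Proof.
  intros Hd.
  assert (s2 := sqrt_sqrt 2 ltac:(lra)). assert (s17 := sqrt_sqrt 17 ltac:(lra)).
  assert (p2 := sqrt_pos 2). assert (p17 := sqrt_pos 17).
  destruct d as [|[|[|[|]]]]; try lia; simpl; split; nra.
Qed.

(** * Bounds on the gap [V^infty - V^lam] *)

Section Solution.

Variables (d : nat) (lam : R) (v v' v'' : R -> R).
Hypotheses (hd : (1 <= d <= 3)%nat) (hlam : 0 < lam)
  (hsol : radial_sol (INR d - 1) v v' v'') (hflux : has_flux d lam v').

Lemma gap_deriv_neg_near_origin :
  exists del, 0 < del /\ forall r, 0 < r < del -> dVinf d r - v' r < 0.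
Proof.
  apply (deriv_diff_neg_near_origin d hd _ _ lam).
  - now apply Vinf_flux_near_origin.
  - now apply (flux_ge d hd lam v v' v'').
Qed.

Lemma sol_le_Vinf r : 0 < r -> v r <= Vinf d r.
Proof.
  intros Hr. assert (HD := INR_dim_bounds d hd).
  assert (HV := radial_sol_Vinf d hd).
  cut (0 <= Vinf d r - v r); [lra|].
  apply (origin_min_principle (INR d - 1) (fun x => Vinf d x + v x)
           (fun x => Vinf d x - v x) (fun x => dVinf d x - v' x)
           (fun x => ddVinf d x - v'' x)); try assumption.
  - intros x Hx. now apply (radial_sol_diff_d1 _ _ _ _ _ _ _ HV hsol).
  - intros x Hx. now apply (radial_sol_diff_d2 _ _ _ _ _ _ _ HV hsol).
  - intros x Hx. now apply (radial_sol_diff_supersol _ _ _ _ _ _ _ HV hsol).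
  - exact gap_deriv_neg_near_origin.
  - apply (liminf_nonneg_of_ge_negpow _ 180 2 1); [lra|]. intros x Hx.
    assert (Hx0 : 0 < x) by lra. rewrite negpow_two by assumption.
    generalize (radial_sol_keller_osserman (INR d - 1) v v' v'' ltac:(split; lra) hsol x Hx0)
      (Vinf_pos d hd x Hx0).
    lra.
Qed.

Lemma gap_ge_negpow R1 r : 0 < R1 -> R1 <= r ->
  Rpower R1 (p_exp d) / Rpower r (p_exp d) * (Vinf d R1 - v R1) <= Vinf d r - v r.
Proof.
  intros HR1 Hr. destruct (p_exp_spec d hd) as [Hp1 Hp2]. set (p := p_exp d) in *.
  assert (HV := radial_sol_Vinf d hd).
  set (K := (Vinf d R1 - v R1) * Rpower R1 p).
  assert (HK : forall x, 0 < x -> negpow K p x = Rpower R1 p / Rpower x p * (Vinf d R1 - v R1)).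
  { intros x Hx. unfold K. rewrite negpow_rescaled by lra. ring. }
  rewrite <- HK by lra.
  cut (0 <= Vinf d r - v r - negpow K p r); [lra|].
  apply (halfline_min_principle (INR d - 1) (fun x => 2 * Vinf d x)
           (fun x => Vinf d x - v x - negpow K p x)
           (fun x => dVinf d x - v' x - negpow' K p x)
           (fun x => ddVinf d x - v'' x - negpow'' K p x) R1); try assumption.
  - intros x Hx. apply derivable_pt_lim_minus.
    + apply (radial_sol_diff_d1 _ _ _ _ _ _ _ HV hsol). lra.
    + apply derivable_pt_lim_negpow. lra.
  - intros x Hx. apply derivable_pt_lim_minus.
    + apply (radial_sol_diff_d2 _ _ _ _ _ _ _ HV hsol). lra.
    + apply derivable_pt_lim_negpow'. lra.
  - intros x Hx. assert (Hx0 : 0 < x) by lra.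
    assert (HVx := Vinf_pos d hd x Hx0). split; [lra|].
    rewrite (radial_op_sub _ (fun x => dVinf d x - v' x)), radial_op_sub,
      (sol_eq _ _ _ _ HV x Hx0), (sol_eq _ _ _ _ hsol x Hx0), radial_op_negpow by assumption.
    replace (INR d - 1 - 1) with (INR d - 2) by ring. rewrite Hp2.
    replace (4 * (4 - INR d) / x ^ 2) with (2 * Vinf d x) by (unfold Vinf; field; lra).
    generalize (pow2_ge_0 (Vinf d x - v x)). nra.
  - rewrite HK by assumption. unfold Rdiv. rewrite Rinv_r by (generalize (Rpower_pos R1 p); lra).
    lra.
  - apply (liminf_nonneg_of_ge_negpow _ K p R1 Hp1). intros x Hx.
    generalize (sol_le_Vinf x ltac:(lra)). lra.
Qed.

Lemma gap_pos R1 : 0 < R1 -> 0 < Vinf d R1 - v R1.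
Proof.
  intros HR1. destruct gap_deriv_neg_near_origin as [del [Hdel Hneg]].
  destruct (exists_small_pos del R1 Hdel HR1) as [t [Ht HtR1]].
  destruct (MVT_cor2 (fun x => Vinf d x - v x) (fun x => dVinf d x - v' x) (t / 2) t)
    as [c [Hmvt Hc]]; [lra| |].
  { intros c Hc. apply (radial_sol_diff_d1 _ _ _ _ _ _ _ (radial_sol_Vinf d hd) hsol). lra. }
  assert (Hc' := Hneg c ltac:(lra)).
  assert (Hgap_t := sol_le_Vinf t ltac:(lra)).
  assert (Hgap_half : 0 < Vinf d (t / 2) - v (t / 2)) by nra.
  assert (Hfac : 0 < Rpower (t / 2) (p_exp d) / Rpower R1 (p_exp d))
    by (apply Rdiv_lt_0_compat; apply Rpower_pos).
  generalize (gap_ge_negpow (t / 2) R1 ltac:(lra) ltac:(lra)). nra.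
Qed.

End Solution.

(* Near [0] the flux of [v] tends to [-2 lam], while that of the dilation of [v0]
   stays above [-2 mu^(4-d) lam0]. *)
Lemma dilate_le_sol d lam v v' v'' lam0 v0 v0' v0'' mu : (1 <= d <= 3)%nat ->
  radial_sol (INR d - 1) v v' v'' -> has_flux d lam v' ->
  radial_sol (INR d - 1) v0 v0' v0'' -> has_flux d lam0 v0' -> 0 < lam0 -> 0 < mu ->
  mu ^ (4 - d) * lam0 < lam -> forall t, 0 < t -> mu ^ 2 * v0 (mu * t) <= v t.
Proof.
  intros hd hsol hflux Hsol0 Hflux0 Hlam0 Hmu Hlt t Ht.
  assert (Hdil := radial_sol_dilate _ _ _ _ mu Hmu Hsol0).
  cut (0 <= v t - mu ^ 2 * v0 (mu * t)); [lra|].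
  apply (origin_min_principle (INR d - 1) (fun x => v x + mu ^ 2 * v0 (mu * x))
           (fun x => v x - mu ^ 2 * v0 (mu * x))
           (fun x => v' x - mu ^ 3 * v0' (mu * x))
           (fun x => v'' x - mu ^ 4 * v0'' (mu * x))); try assumption.
  - intros x Hx. now apply (radial_sol_diff_d1 _ _ _ _ _ _ _ hsol Hdil).
  - intros x Hx. now apply (radial_sol_diff_d2 _ _ _ _ _ _ _ hsol Hdil).
  - intros x Hx. now apply (radial_sol_diff_supersol _ _ _ _ _ _ _ hsol Hdil).
  - apply (deriv_diff_neg_near_origin d hd _ _ (mu ^ (4 - d) * lam0)).
    + now apply (has_flux_near_origin d lam).
    + intros x Hx. rewrite flux_dilate by assumption.
      generalize (flux_ge d hd lam0 v0 v0' v0'' Hsol0 Hflux0 (mu * x) ltac:(nra)).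
      assert (0 < mu ^ (4 - d)) by (apply pow_lt; lra). nra.
  - apply (liminf_nonneg_of_ge_negpow _ (2 * (4 - INR d)) 2 1); [lra|]. intros x Hx.
    rewrite <- Vinf_negpow, <- (Vinf_dilate d mu x) by lra.
    generalize (sol_pos _ _ _ _ hsol x ltac:(lra))
      (sol_le_Vinf d lam0 v0 v0' v0'' hd Hlam0 Hsol0 Hflux0 (mu * x) ltac:(nra)).
    assert (0 < mu ^ 2) by (apply pow_lt; lra). nra.
Qed.

Definition barrier (W R0 p x : R) : R :=
  negpow (2 * W * Rpower R0 p) p x - negpow (W * Rpower R0 (p + / 2)) (p + / 2) x.
Definition barrier' (W R0 p x : R) : R :=
  negpow' (2 * W * Rpower R0 p) p x - negpow' (W * Rpower R0 (p + / 2)) (p + / 2) x.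
Definition barrier'' (W R0 p x : R) : R :=
  negpow'' (2 * W * Rpower R0 p) p x - negpow'' (W * Rpower R0 (p + / 2)) (p + / 2) x.

Lemma barrier_correction_bounds W R0 p x : 0 <= W -> 0 < R0 <= x ->
  0 <= negpow (W * Rpower R0 (p + / 2)) (p + / 2) x <= negpow (W * Rpower R0 p) p x.
Proof.
  intros HW Hx. rewrite !negpow_rescaled by lra.
  rewrite !Rpower_plus.
  assert (Hhalf : Rpower R0 (/ 2) <= Rpower x (/ 2)) by (apply Rle_Rpower_l; lra).
  generalize (Rpower_pos R0 p) (Rpower_pos x p) (Rpower_pos R0 (/ 2)) (Rpower_pos x (/ 2)).
  intros HR0p Hxp HR0h Hxh.
  replace (Rpower R0 p * Rpower R0 (/ 2) / (Rpower x p * Rpower x (/ 2)))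
    with (Rpower R0 p / Rpower x p * (Rpower R0 (/ 2) / Rpower x (/ 2))) by (field; lra).
  assert (Hratio : 0 <= Rpower R0 p / Rpower x p) by (apply Rdiv_le_0_compat; lra).
  assert (Hq : 0 <= Rpower R0 (/ 2) / Rpower x (/ 2) <= 1).
  { split; [apply Rdiv_le_0_compat; lra|].
    apply (Rmult_le_reg_r (Rpower x (/ 2))); [lra|]. unfold Rdiv.
    rewrite Rmult_assoc, Rinv_l; lra. }
  split.
  - apply Rmult_le_pos; [assumption|]. apply Rmult_le_pos; lra.
  - rewrite <- (Rmult_1_r (Rpower R0 p / Rpower x p)) at 2.
    apply Rmult_le_compat_l; [assumption|]. apply Rmult_le_compat_l; lra.
Qed.

Lemma barrier_at W R0 p : 0 < R0 -> barrier W R0 p R0 = W.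
Proof.
  intros HR0. unfold barrier.
  replace (2 * W * Rpower R0 p) with ((2 * W) * Rpower R0 p) by ring.
  rewrite !negpow_rescaled by lra. unfold Rdiv.
  rewrite !Rinv_r by (generalize (Rpower_pos R0 p) (Rpower_pos R0 (p + / 2)); lra). ring.
Qed.

Lemma barrier_bounds W R0 p x : 0 <= W -> 0 < R0 <= x ->
  W * (Rpower R0 p / Rpower x p) <= barrier W R0 p x
  <= 2 * (Rpower R0 p / Rpower x p) * W.
Proof.
  intros HW Hx. destruct (barrier_correction_bounds W R0 p x HW Hx) as [Hlo Hhi].
  unfold barrier. replace (2 * W * Rpower R0 p) with ((2 * W) * Rpower R0 p) by ring.
  rewrite (negpow_rescaled (2 * W)) by lra. rewrite (negpow_rescaled W R0 p x) in Hhi by lra.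
  split; lra.
Qed.

Section UpperBound.

Variables (d : nat) (v v' v'' : R -> R) (R0 : R).
Hypotheses (hd : (1 <= d <= 3)%nat) (hsol : radial_sol (INR d - 1) v v' v'') (hR0 : 0 < R0).

Lemma gap_le_supersol P P' P'' :
  (forall x, R0 <= x -> derivable_pt_lim P x (P' x)) ->
  (forall x, R0 < x -> derivable_pt_lim P' x (P'' x)) ->
  (forall x, R0 < x -> radial_op (INR d - 1) P' P'' x <= (Vinf d x + v x) * P x) ->
  (forall x, R0 <= x -> 0 <= P x) -> Vinf d R0 - v R0 <= P R0 ->
  forall x, R0 <= x -> Vinf d x - v x <= P x.
Proof.
  intros HP1 HP2 HPsup HPpos HP0 x Hx.
  assert (HV := radial_sol_Vinf d hd).
  cut (0 <= P x - (Vinf d x - v x)); [lra|].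
  apply (halfline_min_principle (INR d - 1) (fun x => Vinf d x + v x)
           (fun x => P x - (Vinf d x - v x)) (fun x => P' x - (dVinf d x - v' x))
           (fun x => P'' x - (ddVinf d x - v'' x)) R0); try assumption; try lra.
  - intros r Hr. apply derivable_pt_lim_minus; [now apply HP1|].
    apply (radial_sol_diff_d1 _ _ _ _ _ _ _ HV hsol). lra.
  - intros r Hr. apply derivable_pt_lim_minus; [now apply HP2|].
    apply (radial_sol_diff_d2 _ _ _ _ _ _ _ HV hsol). lra.
  - intros r Hr. assert (Hr0 : 0 < r) by lra.
    destruct (radial_sol_diff_supersol _ _ _ _ _ _ _ HV hsol r Hr0) as [Hc _].
    split; [exact Hc|].
    rewrite radial_op_sub, radial_op_sub, (sol_eq _ _ _ _ HV r Hr0), (sol_eq _ _ _ _ hsol r Hr0).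
    specialize (HPsup r Hr). nra.
  - apply (liminf_nonneg_of_ge_negpow _ (2 * (4 - INR d)) 2 R0); [lra|]. intros r Hr.
    rewrite <- Vinf_negpow by lra.
    generalize (HPpos r Hr) (sol_pos _ _ _ _ hsol r ltac:(lra)). lra.
Qed.

Hypotheses (hnonneg : forall x, R0 <= x -> 0 <= Vinf d x - v x)
  (hsmall : forall x, R0 <= x -> Vinf d x - v x <= Vinf d x / 10).

Lemma gap_le_negpow q : q ^ 2 - (INR d - 2) * q <= 19 / 10 * (2 * (4 - INR d)) ->
  forall x, R0 <= x -> Vinf d x - v x <= negpow ((Vinf d R0 - v R0) * Rpower R0 q) q x.
Proof.
  intros Hq. set (K := (Vinf d R0 - v R0) * Rpower R0 q).
  assert (HPpos : forall x, 0 <= negpow K q x).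
  { intros x. apply Rmult_le_pos; [|left; apply Rpower_pos].
    apply Rmult_le_pos; [apply hnonneg; lra|left; apply Rpower_pos]. }
  apply (gap_le_supersol _ (negpow' K q) (negpow'' K q)).
  - intros x Hx. apply derivable_pt_lim_negpow. lra.
  - intros x Hx. apply derivable_pt_lim_negpow'. lra.
  - intros x Hx. rewrite radial_op_negpow by lra.
    replace (INR d - 1 - 1) with (INR d - 2) by ring.
    apply Rmult_le_compat_r; [apply HPpos|].
    assert (Hv : 9 / 10 * Vinf d x <= v x) by (generalize (hsmall x ltac:(lra)); lra).
    unfold Vinf in *. assert (Hx2 : 0 < x ^ 2) by (apply pow_lt; lra).
    apply (Rmult_le_reg_r (x ^ 2)); [exact Hx2|].
    replace ((q ^ 2 - (INR d - 2) * q) / x ^ 2 * x ^ 2) with (q ^ 2 - (INR d - 2) * q)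
      by (field; lra).
    apply (Rmult_le_compat_r (x ^ 2)) in Hv; [|lra].
    replace (9 / 10 * (2 * (4 - INR d) / x ^ 2) * x ^ 2) with (9 / 10 * (2 * (4 - INR d)))
      in Hv by (field; lra).
    replace ((2 * (4 - INR d) / x ^ 2 + v x) * x ^ 2) with (2 * (4 - INR d) + v x * x ^ 2)
      by (field; lra).
    lra.
  - intros x Hx. apply HPpos.
  - right. unfold K. rewrite negpow_rescaled by lra. unfold Rdiv.
    rewrite Rinv_r by (generalize (Rpower_pos R0 q); lra). ring.
Qed.

Lemma gap_le_decay_five_halves y : R0 <= y ->
  Vinf d y - v y
  <= (Vinf d R0 - v R0) * (R0 ^ 2 / y ^ 2) * (Rpower R0 (/ 2) / Rpower y (/ 2)).
Proof.
  intros Hy. assert (HD := INR_dim_bounds d hd).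
  eapply Rle_trans; [apply (gap_le_negpow (2 + / 2)); [nra|exact Hy]|].
  rewrite negpow_rescaled, !Rpower_plus, !Rpower_two by lra. right.
  generalize (Rpower_pos y (/ 2)). intros. field. lra.
Qed.

(* Against [L_k w = (2 V^infty - w) w], the main term of the barrier is exact and its
   correction, smaller by a factor [(R0/y)^(1/2)], absorbs the nonlinear term [w * barrier],
   which [gap_le_decay_five_halves] makes smaller by the same factor. *)
Lemma barrier_super y : R0 < y ->
  radial_op (INR d - 1) (barrier' (Vinf d R0 - v R0) R0 (p_exp d))
    (barrier'' (Vinf d R0 - v R0) R0 (p_exp d)) y
  <= (Vinf d y + v y) * barrier (Vinf d R0 - v R0) R0 (p_exp d) y.
Proof.
  intros Hy. destruct (p_exp_spec d hd) as [Hp1 Hp2].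
  assert (HD := INR_dim_bounds d hd). assert (Hy0 : 0 < y) by lra.
  set (W0 := Vinf d R0 - v R0). set (p := p_exp d) in *. clearbody p.
  assert (HW0 : 0 <= W0) by (apply hnonneg; lra).
  set (N := p + / 4 - (INR d - 2) / 2).
  assert (HN : 2 * (W0 * R0 ^ 2) <= N).
  { assert (H := hsmall R0 ltac:(lra)). fold W0 in H. unfold Vinf in H.
    apply (Rmult_le_compat_r (R0 ^ 2)) in H; [|apply pow_le; lra].
    replace (2 * (4 - INR d) / R0 ^ 2 / 10 * R0 ^ 2) with ((4 - INR d) / 5) in H
      by (field; lra).
    unfold N. lra. }
  destruct (barrier_correction_bounds W0 R0 p y HW0 ltac:(lra)) as [HH0 HHG].
  assert (HG2 : negpow (2 * W0 * Rpower R0 p) p y = 2 * negpow (W0 * Rpower R0 p) p y)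
    by (unfold negpow; ring).
  assert (HHG1 : negpow (W0 * Rpower R0 (p + / 2)) (p + / 2) y
                 = negpow (W0 * Rpower R0 p) p y * (Rpower R0 (/ 2) / Rpower y (/ 2))).
  { rewrite !negpow_rescaled, !Rpower_plus by lra.
    generalize (Rpower_pos y p) (Rpower_pos y (/ 2)). intros. field. lra. }
  assert (Hgap := gap_le_decay_five_halves y ltac:(lra)). fold W0 in Hgap.
  unfold barrier, barrier', barrier''.
  rewrite radial_op_sub, !radial_op_negpow by assumption. rewrite HG2 in *.
  set (G := negpow (W0 * Rpower R0 p) p y) in *.
  set (H := negpow (W0 * Rpower R0 (p + / 2)) (p + / 2) y) in *.
  assert (HWP : (Vinf d y - v y) * (2 * G - H) <= 2 * (W0 * R0 ^ 2) * (H / y ^ 2)).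
  { apply Rle_trans with (W0 * (R0 ^ 2 / y ^ 2) * (Rpower R0 (/ 2) / Rpower y (/ 2)) * (2 * G)).
    - apply Rmult_le_compat; try lra. apply hnonneg. lra.
    - right. rewrite HHG1. generalize (Rpower_pos y (/ 2)). intros. field. split; lra. }
  replace (INR d - 1 - 1) with (INR d - 2) by ring. rewrite Hp2.
  replace ((p + / 2) ^ 2 - (INR d - 2) * (p + / 2)) with (4 * (4 - INR d) + N)
    by (unfold N; nra).
  replace (4 * (4 - INR d) / y ^ 2 * (2 * G) - (4 * (4 - INR d) + N) / y ^ 2 * H)
    with (2 * Vinf d y * (2 * G - H) - N * (H / y ^ 2)) by (unfold Vinf; field; lra).
  replace ((Vinf d y + v y) * (2 * G - H))
    with (2 * Vinf d y * (2 * G - H) - (Vinf d y - v y) * (2 * G - H)) by ring.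
  assert (HHy : 0 <= H / y ^ 2) by (apply Rdiv_le_0_compat; [lra|apply pow_lt; lra]).
  assert (2 * (W0 * R0 ^ 2) * (H / y ^ 2) <= N * (H / y ^ 2))
    by (apply Rmult_le_compat_r; assumption).
  lra.
Qed.

Lemma gap_le_negpow_p x : R0 <= x ->
  Vinf d x - v x <= 2 * (Rpower R0 (p_exp d) / Rpower x (p_exp d)) * (Vinf d R0 - v R0).
Proof.
  intros Hx. set (W0 := Vinf d R0 - v R0). assert (HW0 : 0 <= W0) by (apply hnonneg; lra).
  eapply Rle_trans; [|apply (barrier_bounds W0 R0 (p_exp d) x HW0); lra].
  apply (gap_le_supersol (barrier W0 R0 (p_exp d)) (barrier' W0 R0 (p_exp d))
           (barrier'' W0 R0 (p_exp d))); [| |exact barrier_super| | |exact Hx].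
  - intros y Hy. apply derivable_pt_lim_minus; apply derivable_pt_lim_negpow; lra.
  - intros y Hy. apply derivable_pt_lim_minus; apply derivable_pt_lim_negpow'; lra.
  - intros y Hy. eapply Rle_trans; [|apply (barrier_bounds W0 R0 (p_exp d) y HW0); lra].
    apply Rmult_le_pos; [assumption|apply Rdiv_le_0_compat; [|apply Rpower_pos]].
    left; apply Rpower_pos.
  - right. symmetry. now apply barrier_at.
Qed.

End UpperBound.

(** * The reference solution *)

Section ReferenceSolution.

Variables (d : nat) (v v' v'' : R -> R).
Hypotheses (hd : (1 <= d <= 3)%nat) (hsol : radial_sol (INR d - 1) v v' v'').

Lemma sol_ge_negpow_of_far :
  (forall x, 0 < x -> v x < 9 / 10 * Vinf d x) ->
  forall x, 1 <= x -> negpow (v 1) (2 - / 25) x <= v x.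
Proof.
  intros Hfar x Hx. assert (HD := INR_dim_bounds d hd).
  set (q := 2 - / 25). set (Q := q ^ 2 - (INR d - 2) * q).
  assert (HQ : 9 / 10 * (2 * (4 - INR d)) <= Q) by (unfold Q, q; nra).
  cut (0 <= v x - negpow (v 1) q x); [lra|].
  apply (halfline_min_principle (INR d - 1) (fun x => Q / x ^ 2)
           (fun x => v x - negpow (v 1) q x) (fun x => v' x - negpow' (v 1) q x)
           (fun x => v'' x - negpow'' (v 1) q x) 1); try assumption.
  - intros r Hr. apply derivable_pt_lim_minus;
      [apply (sol_d1 _ _ _ _ hsol)|apply derivable_pt_lim_negpow]; lra.
  - intros r Hr. apply derivable_pt_lim_minus;
      [apply (sol_d2 _ _ _ _ hsol)|apply derivable_pt_lim_negpow']; lra.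
  - intros r Hr. assert (Hr0 : 0 < r) by lra.
    assert (Hr2 : 0 < r ^ 2) by (apply pow_lt; lra).
    assert (HQr : 0 < Q / r ^ 2) by (apply Rdiv_lt_0_compat; lra).
    split; [exact HQr|].
    rewrite radial_op_sub, (sol_eq _ _ _ _ hsol r Hr0), radial_op_negpow by assumption.
    replace (INR d - 1 - 1) with (INR d - 2) by ring. fold Q.
    assert (Hvr : v r <= Q / r ^ 2).
    { generalize (Hfar r Hr0). unfold Vinf. intros Hlt.
      apply Rle_trans with (9 / 10 * (2 * (4 - INR d)) / r ^ 2);
        [unfold Rdiv in *; lra|].
      apply Rmult_le_compat_r; [left; apply Rinv_0_lt_compat|]; assumption. }
    generalize (sol_pos _ _ _ _ hsol r Hr0). nra.
  - rewrite negpow_one. lra.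
  - apply (liminf_nonneg_of_ge_negpow _ (v 1) q 1); [unfold q; lra|]. intros r Hr.
    generalize (sol_pos _ _ _ _ hsol r ltac:(lra)). lra.
Qed.

(* Otherwise [L_k v = v^2 <= (Q / r^2) v] where [Q] is the eigenvalue of [r^(-q)], [q < 2],
   so [v] decays no faster than [r^(-q)], against [v < V^infty = O(r^(-2))]. *)
Lemma sol_near_Vinf_somewhere : exists rs, 0 < rs /\ 9 / 10 * Vinf d rs <= v rs.
Proof.
  apply NNPP. intros Hnone.
  assert (Hfar : forall x, 0 < x -> v x < 9 / 10 * Vinf d x).
  { intros x Hx. apply Rnot_le_lt. intros Hle. apply Hnone. now exists x. }
  assert (HD := INR_dim_bounds d hd).
  set (K := v 1). assert (HK : 0 < K) by (apply (sol_pos _ _ _ _ hsol); lra).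
  set (x := Rmax 1 (Rpower (6 / K) 25)).
  assert (Hx1 : 1 <= x) by apply Rmax_l.
  assert (Hx0 : 0 < x) by lra.
  assert (Hgrow : 6 / K <= Rpower x (/ 25)).
  { replace (6 / K) with (Rpower (Rpower (6 / K) 25) (/ 25)).
    - apply Rle_Rpower_l; [lra|split; [apply Rpower_pos|apply Rmax_r]].
    - rewrite Rpower_mult. replace (25 * / 25) with 1 by field.
      apply Rpower_1. apply Rdiv_lt_0_compat; lra. }
  assert (Hlow := sol_ge_negpow_of_far Hfar x Hx1). fold K in Hlow.
  unfold Rminus in Hlow. rewrite negpow_plus, Ropp_involutive, negpow_two in Hlow by lra.
  specialize (Hfar x Hx0). unfold Vinf in Hfar.
  assert (Hx2 : 0 < x ^ 2) by (apply pow_lt; lra).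
  assert (Hcmp : K * Rpower x (/ 25) < 9 / 10 * (2 * (4 - INR d))).
  { apply (Rmult_le_compat_r (x ^ 2)) in Hlow; [|lra].
    apply (Rmult_lt_compat_r (x ^ 2)) in Hfar; [|lra].
    replace (K / x ^ 2 * Rpower x (/ 25) * x ^ 2) with (K * Rpower x (/ 25)) in Hlow
      by (field; lra).
    replace (9 / 10 * (2 * (4 - INR d) / x ^ 2) * x ^ 2) with (9 / 10 * (2 * (4 - INR d)))
      in Hfar by (field; lra).
    lra. }
  apply (Rmult_le_compat_l K) in Hgrow; [|lra].
  replace (K * (6 / K)) with 6 in Hgrow by (field; lra). lra.
Qed.

End ReferenceSolution.

Lemma gap_le_tenth_far d lam v v' v'' v0 v0' v0'' rs R0 : (1 <= d <= 3)%nat ->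
  radial_sol (INR d - 1) v v' v'' -> has_flux d lam v' ->
  radial_sol (INR d - 1) v0 v0' v0'' -> has_flux d 1 v0' ->
  0 < rs -> 9 / 10 * Vinf d rs <= v0 rs -> 0 < R0 -> rs ^ (4 - d) < lam * R0 ^ (4 - d) ->
  forall x, R0 <= x -> Vinf d x - v x <= Vinf d x / 10.
Proof.
  intros hd Hsol Hflux Hsol0 Hflux0 Hrs Hclose HR0 Hlam x Hx.
  set (mu := rs / x).
  assert (Hmu : 0 < mu) by (apply Rdiv_lt_0_compat; lra).
  assert (Hmux : mu * x = rs) by (unfold mu; field; lra).
  assert (Hmulam : mu ^ (4 - d) * 1 < lam).
  { assert (HR0x : R0 ^ (4 - d) <= x ^ (4 - d)) by (apply pow_incr; lra).
    assert (Hxd : 0 < x ^ (4 - d)) by (apply pow_lt; lra).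
    assert (Hscale : mu ^ (4 - d) * x ^ (4 - d) = rs ^ (4 - d))
      by (rewrite <- Rpow_mult_distr, Hmux; reflexivity).
    apply (Rmult_lt_reg_r (x ^ (4 - d))); [exact Hxd|].
    assert (lam * R0 ^ (4 - d) <= lam * x ^ (4 - d)).
    { apply Rmult_le_compat_l; [|assumption].
      assert (0 < R0 ^ (4 - d)) by (apply pow_lt; lra).
      assert (0 < rs ^ (4 - d)) by (apply pow_lt; lra). nra. }
    lra. }
  assert (Hcmp := dilate_le_sol d lam v v' v'' 1 v0 v0' v0'' mu hd Hsol Hflux Hsol0 Hflux0
                    Rlt_0_1 Hmu Hmulam x ltac:(lra)).
  rewrite Hmux in Hcmp.
  assert (HV : mu ^ 2 * Vinf d rs = Vinf d x) by (rewrite <- Hmux; apply Vinf_dilate; lra).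
  assert (Hmu2 : 0 < mu ^ 2) by (apply pow_lt; lra).
  apply (Rmult_le_compat_l (mu ^ 2)) in Hclose; [|lra].
  lra.
Qed.

Theorem lemma5p4 (d : nat) (hd : (1 <= d <= 3)%nat) :
  exists lamstar C : R, 0 < lamstar /\
    forall V : R -> R -> R,
      (forall lam, 0 < lam -> IsVlam d lam (V lam)) ->
      forall R0 : R, 0 < R0 ->
        (forall r lam, R0 <= r -> 0 < lam ->
           0 < Rpower R0 (p_exp d) / Rpower r (p_exp d) * (Vinf d R0 - V lam R0) /\
           Rpower R0 (p_exp d) / Rpower r (p_exp d) * (Vinf d R0 - V lam R0)
             <= Vinf d r - V lam r) /\
        (forall r lam, R0 <= r -> lamstar / R0 ^ (4 - d) <= lam ->
           Vinf d r - V lam r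
             <= C * (Rpower R0 (p_exp d) / Rpower r (p_exp d)) * (Vinf d R0 - V lam R0)).
Proof.
  destruct (classic (exists V0 : R -> R -> R, forall lam, 0 < lam -> IsVlam d lam (V0 lam)))
    as [[V0 HV0]|Hnone].
  2:{ exists 1, 1. split; [lra|]. intros V HV. exfalso. apply Hnone. now exists V. }
  destruct (IsVlam_sol d 1 (V0 1) (HV0 1 Rlt_0_1)) as [v0' [v0'' [Hsol0 Hflux0]]].
  destruct (sol_near_Vinf_somewhere d _ _ _ hd Hsol0) as [rs [Hrs Hclose]].
  assert (Hrsd : 0 < rs ^ (4 - d)) by (apply pow_lt; lra).
  exists (2 * rs ^ (4 - d)), 2. split; [lra|].
  intros V HV R0 HR0. split; intros r lam Hr Hlam.
  - destruct (IsVlam_sol d lam (V lam) (HV lam Hlam)) as [v' [v'' [Hsol Hflux]]].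
    split.
    + apply Rmult_lt_0_compat; [apply Rdiv_lt_0_compat; apply Rpower_pos|].
      now apply (gap_pos d lam (V lam) v' v'').
    + now apply (gap_ge_negpow d lam (V lam) v' v'').
  - assert (HR0d : 0 < R0 ^ (4 - d)) by (apply pow_lt; lra).
    apply (Rmult_le_compat_r (R0 ^ (4 - d))) in Hlam; [|lra].
    replace (2 * rs ^ (4 - d) / R0 ^ (4 - d) * R0 ^ (4 - d)) with (2 * rs ^ (4 - d))
      in Hlam by (field; lra).
    assert (Hlam0 : 0 < lam) by nra.
    destruct (IsVlam_sol d lam (V lam) (HV lam Hlam0)) as [v' [v'' [Hsol Hflux]]].
    apply (gap_le_negpow_p d (V lam) v' v'' R0); try assumption.
    + intros x Hx. generalize (sol_le_Vinf d lam (V lam) v' v'' hd Hlam0 Hsol Hflux x ltac:(lra)).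
      lra.
    + apply (gap_le_tenth_far d lam (V lam) v' v'' (V0 1) v0' v0'' rs R0); try assumption.
      lra.
Qed.
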